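(* Let $\mathbb{A}$ be an epistemic Heyting algebra, $a\in\mathbb{A}$, $b\in\mathbb{A}$ and $i\in\mathsf{Ag}$. The following are equivalent: (1) $[b]\in\mathsf{Min}_i(\mathbb{A}^a)$; (2) $[b]=[b']$ for a unique $b'\in\mathsf{Min}_i(\mathbb{A})$ such that $b'\wedge a\neq\bot$.
   Context: Fix a set $\mathsf{Ag}$ of agents. A monadic Heyting algebra is a Heyting algebra $\mathbb{L}$ with, for each $i\in\mathsf{Ag}$, monotone unary operations $\lozenge_i,\Box_i$ such that for all $a,b$: $a\leq\lozenge_i a$; $\Box_i a\leq a$; $\lozenge_i(a\vee b)\leq\lozenge_i a\vee\lozenge_i b$; $\Box_i(a\to b)\leq\Box_i a\to\Box_i b$; $\lozenge_i a\leq\Box_i\lozenge_i a$; $\lozenge_i\Box_i a\leq\Box_i a$; $\Box_i(a\to b)\leq\lozenge_i a\to\lozenge_i b$; $\lozenge_i\bot\leq\bot$; $\top\leq\Box_i\top$. An epistemic Heyting algebra is a finite monadic Heyting algebra with $\lozenge_i a\vee\neg\lozenge_i a=\top$ for all $i,a$. An element $c$ is $i$-minimal if $c\neq\bot$, $\lozenge_i c=c$, and whenever $d<c$ and $\lozenge_i d=d$ then $d=\bot$; $\mathsf{Min}_i(\cdot)$ is the set of $i$-minimal elements. The pseudo-quotient algebra $\mathbb{A}^a$: $b\cong_a c$ iff $b\wedge a=c\wedge a$; carrier the quotient Heyting algebra $\mathbb{L}/{\cong_a}$ with classes $[c]$ ($[b]\leq[c]$ iff $b\wedge a\leq c\wedge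 a$); $\lozenge^a_i[b]=[\lozenge_i(b\wedge a)]$, $\Box^a_i[b]=[\Box_i(a\to b)]$; $i$-minimality in $\mathbb{A}^a$ is w.r.t. $\lozenge^a_i$. *)

From HB Require Import structures.
From mathcomp Require Import all_boot all_order.
Set Implicit Arguments. Unset Strict Implicit. Unset Printing Implicit Defensive.
Import Order.TTheory.
Local Open Scope order_scope.

(* Finiteness (needed for epistemic Heyting algebras) is given by the carrier
   being a finTBDistrLatticeType. *)
Definition is_heyting {d} {L : tbDistrLatticeType d} (imp : L -> L -> L) : Prop :=
  forall a b c : L, (c <= imp a b) = (c `&` a <= b).

Definition hneg {d} {L : tbDistrLatticeType d} (imp : L -> L -> L) (a : L) : L :=
  imp a \bot.

Definition is_monadic_heyting {d} {L : tbDistrLatticeType d} {Ag : Type}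
  (imp : L -> L -> L) (dia box : Ag -> L -> L) : Prop :=
  is_heyting imp /\
  forall i : Ag,
    (forall a b : L, a <= b -> dia i a <= dia i b) /\
    (forall a b : L, a <= b -> box i a <= box i b) /\
    (forall a : L, a <= dia i a) /\
    (forall a : L, box i a <= a) /\
    (forall a b : L, dia i (a `|` b) <= dia i a `|` dia i b) /\
    (forall a b : L, box i (imp a b) <= imp (box i a) (box i b)) /\
    (forall a : L, dia i a <= box i (dia i a)) /\
    (forall a : L, dia i (box i a) <= box i a) /\
    (forall a b : L, box i (imp a b) <= imp (dia i a) (dia i b)) /\
    dia i \bot <= \bot /\
    \top <= box i \top.

Definition is_epistemic_heyting {d} {L : finTBDistrLatticeType d} {Ag : Type}
  (imp : L -> L -> L) (dia box : Ag -> L -> L) : Prop :=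
  is_monadic_heyting imp dia box /\
  forall (i : Ag) (a : L), dia i a `|` hneg imp (dia i a) = \top.

Definition i_minimal {d} {L : tbDistrLatticeType d} (dia : L -> L) (c : L) : Prop :=
  c <> \bot /\ dia c = c /\
  forall e : L, e < c -> dia e = e -> e = \bot.

(* The pseudo-quotient algebra A^a = L / ~=_a, with b ~=_a c iff b /\ a = c /\ a.
   Its classes are [c]; we speak about them via representatives. *)
Definition qeq {d} {L : tbDistrLatticeType d} (a b c : L) : Prop :=
  b `&` a = c `&` a.
Definition qle {d} {L : tbDistrLatticeType d} (a b c : L) : Prop :=
  b `&` a <= c `&` a.
Definition qdia {d} {L : tbDistrLatticeType d} (dia : L -> L) (a b : L) : L :=
  dia (b `&` a).                                      (* dia^a [b] = [dia (b /\ a)] *)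
Definition qbox {d} {L : tbDistrLatticeType d} (imp : L -> L -> L) (box : L -> L)
  (a b : L) : L := box (imp a b).                     (* box^a [b] = [box (a -> b)] *)

(* [c] is i-minimal in A^a (bottom of A^a is [bot]; [e] < [c] means
   [e] <= [c] and [e] <> [c]); quantifying over representatives e is the
   same as quantifying over classes [e]. *)
Definition q_i_minimal {d} {L : tbDistrLatticeType d} (dia : L -> L) (a c : L) : Prop :=
  ~ qeq a c \bot /\ qeq a (qdia dia a c) c /\
  forall e : L, (qle a e c /\ ~ qeq a e c) -> qeq a (qdia dia a e) e -> qeq a e \bot.

(* The fixed points of dia_i are closed under meets and, thanks to the
   epistemic axiom, under Heyting negation. Hence an i-minimal y splits every
   fixed x: either y <= x or y /\ x = bot. This makes an i-minimal b' with
   b' /\ a <> bot give an i-minimal class [b'] of A^a, and two such b' with the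
   same class meet non-trivially, so they coincide. Conversely, if [b] is
   i-minimal in A^a, then dia_i (b /\ a) is a fixed point in [b]; a minimal
   fixed point y below it with y /\ a <> bot is i-minimal, since negation cuts
   away any fixed part of y disjoint from a, and [y] = [b] by minimality of [b]. *)

From HB Require Import structures.
From mathcomp Require Import all_boot all_order.
Import Order.TTheory.
Local Open Scope order_scope.

Lemma exists_minimal {disp : Order.disp_t} {T : finPOrderType disp}
    (P : pred T) (x : T) :
  P x -> exists y, P y /\ forall z, z < y -> ~~ P z.
Proof.
move=> Px; have [y Py ymin] := arg_minnP (fun y => #|[pred w | w < y]|) Px.
exists y; split => // z zy; apply/negP => Pz.
have := ymin z Pz; rewrite leqNgt => /negP; apply.
apply: proper_card; apply/properP; split.
  by apply/subsetP => w; rewrite !inE => /lt_trans; apply.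
by exists z; rewrite !inE ?ltxx.
Qed.

Section Heyting.

Context {disp : Order.disp_t} {L : tbDistrLatticeType disp} {imp : L -> L -> L}.
Hypothesis heyting : is_heyting imp.

Lemma meet_hneg (x : L) : x `&` hneg imp x = \bot.
Proof. by apply/eqP; rewrite -lex0 meetC -heyting. Qed.

Lemma le_hneg_eq0 (x : L) : x <= hneg imp x -> x = \bot.
Proof. by rewrite heyting meetxx lex0 => /eqP. Qed.

Lemma hnegK (x : L) : x `|` hneg imp x = \top -> hneg imp (hneg imp x) = x.
Proof.
move=> x_compl; apply/le_anti; rewrite heyting meet_hneg lexx andbT.
rewrite -[X in X <= _]meetx1 -x_compl meetUr leUx leIr /=.
by rewrite meetC meet_hneg le0x.
Qed.

End Heyting.

Section Monadic.

Context {disp : Order.disp_t} {L : tbDistrLatticeType disp}.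
Context {imp : L -> L -> L} {D B : L -> L}.
Hypothesis heyting : is_heyting imp.
Hypothesis D_mono : {homo D : x y / x <= y}.
Hypothesis D_ext : forall x, x <= D x.
Hypothesis B_defl : forall x, B x <= x.
Hypothesis D_le_BD : forall x, D x <= B (D x).
Hypothesis DB_le_B : forall x, D (B x) <= B x.
Hypothesis B_imp_le : forall x y, B (imp x y) <= imp (D x) (D y).
Hypothesis D_bot : D \bot <= \bot.
Hypothesis D_complemented : forall x, D x `|` hneg imp (D x) = \top.

Lemma dia_fixedI (x y : L) : D x = x -> D y = y -> D (x `&` y) = x `&` y.
Proof.
move=> Dx Dy; apply/le_anti; rewrite D_ext andbT lexI.
by apply/andP; split; [rewrite -{2}Dx | rewrite -{2}Dy]; apply: D_mono;
  rewrite ?leIl ?leIr.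
Qed.

Lemma qdia_fixed (a b : L) : D b = b -> qeq a (qdia D a b) b.
Proof.
move=> Db; apply/le_anti/andP; split; last by rewrite lexI D_ext leIr.
by apply: leI2 => //; rewrite -{2}Db; apply: D_mono; rewrite leIl.
Qed.

Lemma box_dia (x : L) : B (D x) = D x.
Proof. by apply/le_anti; rewrite B_defl D_le_BD. Qed.

Lemma dia_idem (x : L) : D (D x) = D x.
Proof. by apply/le_anti; rewrite D_ext andbT -(box_dia x) DB_le_B. Qed.

(* Instantiate [B_imp_le] at [~ z] and [bot]: as [z] is fixed and complemented,
   [B (~ ~ z)] is [z], giving [z /\ D (~ z) <= D bot = bot]. *)
Lemma dia_fixedN (z : L) : D z = z -> D (hneg imp z) = hneg imp z.
Proof.
move=> Dz; have Bz : B z = z by rewrite -Dz box_dia.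
have z_compl : z `|` hneg imp z = \top by rewrite -Dz D_complemented.
have := B_imp_le (hneg imp z) \bot.
rewrite -/(hneg imp (hneg imp z)) hnegK // Bz heyting => /le_trans/(_ D_bot).
by move=> zD; apply/le_anti; rewrite D_ext andbT heyting meetC.
Qed.

End Monadic.

Section IMinimal.

Context {disp : Order.disp_t} {L : tbDistrLatticeType disp}.
Context {imp : L -> L -> L} {D : L -> L}.
Hypothesis heyting : is_heyting imp.
Hypothesis D_mono : {homo D : x y / x <= y}.
Hypothesis D_ext : forall x, x <= D x.
Hypothesis D_idem : forall x, D (D x) = D x.
Hypothesis D_fixedN : forall z, D z = z -> D (hneg imp z) = hneg imp z.

Lemma i_minimal_le_or_disjoint {y x : L} :
  i_minimal D y -> D x = x -> y <= x \/ y `&` x = \bot.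
Proof.
case=> _ [Dy ymin] Dx; have [yx | yx] := eqVneq (y `&` x) y.
  by left; rewrite -yx leIr.
by right; apply: ymin; rewrite ?lt_neqAle ?yx ?leIl ?dia_fixedI.
Qed.

Lemma i_minimal_eq (y y' : L) :
  i_minimal D y -> i_minimal D y' -> y `&` y' <> \bot -> y = y'.
Proof.
move=> ymin y'min yy'.
have [yy'_le | //] := i_minimal_le_or_disjoint ymin (proj1 (proj2 y'min)).
have [y'y_le | ] := i_minimal_le_or_disjoint y'min (proj1 (proj2 ymin)).
  by apply/le_anti; rewrite yy'_le y'y_le.
by rewrite meetC.
Qed.

Lemma qeq_i_minimal_eq (a y y' : L) :
  i_minimal D y -> i_minimal D y' -> y `&` a <> \bot -> qeq a y y' -> y = y'.
Proof.
move=> ymin y'min ya yy'; apply: i_minimal_eq => // yy'0; apply: ya.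
by rewrite -[y `&` a]meetxx {2}yy' meetACA yy'0 meet0x.
Qed.

(* Any fixed part [z] of [y] is disjoint from [a], so [y /\ ~ z] has the same
   class as [y] and is therefore [y] itself. *)
Lemma minimal_fixed_i_minimal (a y : L) :
  D y = y -> y `&` a <> \bot ->
  (forall z, z < y -> D z = z -> z `&` a = \bot) -> i_minimal D y.
Proof.
move=> Dy ya below_y; split; first by move=> y0; apply: ya; rewrite y0 meet0x.
split => // z zy Dz; apply: (le_hneg_eq0 heyting).
have za := below_y z zy Dz.
set w := y `&` hneg imp z.
have Dw : D w = w by rewrite dia_fixedI ?D_fixedN.
have wa : w `&` a = y `&` a.
  apply/le_anti; rewrite leI2 ?leIl //= lexI leIr andbT lexI leIl /=.
  by rewrite heyting -meetA (meetC a) za meetx0.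
have wy : w = y.
  apply/eqP; apply: contraT => wy.
  by have := below_y w; rewrite lt_neqAle wy leIl Dw wa => /(_ isT erefl).
by rewrite (le_trans (ltW zy)) // -wy leIr.
Qed.

Lemma q_i_minimal_qeq_fixed (a b y : L) :
  q_i_minimal D a b -> D y = y -> y `&` a <> \bot -> y <= D (b `&` a) ->
  qeq a b y.
Proof.
case=> _ [bfix bmin] Dy ya yb; apply/eqP; apply: contraT => byn.
case: ya; rewrite -(meet0x a); apply: bmin; last exact: qdia_fixed.
split; first by rewrite /qle -bfix leI2.
by move=> yb'; move: byn; rewrite yb' eqxx.
Qed.

Lemma q_i_minimal_of_i_minimal (a b b' : L) :
  i_minimal D b' -> b' `&` a <> \bot -> qeq a b b' -> q_i_minimal D a b.
Proof.
move=> b'min b'a bb'; have Db' := proj1 (proj2 b'min).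
rewrite /q_i_minimal /qeq /qle /qdia meet0x bb'.
split=> //; split; first exact: qdia_fixed.
move=> e [eb' nqe] De; set y := D (e `&` a) in De.
have Dy : D y = y by rewrite /y D_idem.
case: (i_minimal_le_or_disjoint b'min Dy) => [b'y | b'y0].
  by case: nqe; apply/le_anti; rewrite eb' /= -De leI2.
apply/eqP; rewrite -lex0 -b'y0 lexI D_ext andbT.
exact: le_trans eb' (leIl _ _).
Qed.

End IMinimal.

Section Finite.

Context {disp : Order.disp_t} {L : finTBDistrLatticeType disp}.
Context {imp : L -> L -> L} {D : L -> L}.
Hypothesis heyting : is_heyting imp.
Hypothesis D_mono : {homo D : x y / x <= y}.
Hypothesis D_ext : forall x, x <= D x.
Hypothesis D_idem : forall x, D (D x) = D x.
Hypothesis D_fixedN : forall z, D z = z -> D (hneg imp z) = hneg imp z.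

Lemma q_i_minimal_exists (a b : L) :
  q_i_minimal D a b -> exists y, i_minimal D y /\ y `&` a <> \bot /\ qeq a b y.
Proof.
move=> bmin; have [b0 [bfix _]] := bmin; set x := D (b `&` a) in bfix.
have [|y [/and3P [/eqP Dy /eqP ya yx] below_y]] :=
  exists_minimal (fun y => [&& D y == y, y `&` a != \bot & y <= x]) x.
  rewrite /x D_idem eqxx lexx andbT bfix /=.
  by apply/eqP => ba; apply: b0; rewrite /qeq ba meet0x.
have ymin : i_minimal D y.
  apply: (minimal_fixed_i_minimal heyting D_mono D_ext D_fixedN _ _ Dy ya).
  move=> z zy Dz; apply/eqP; apply: contraT => za.
  by have := below_y z zy; rewrite Dz eqxx za (le_trans (ltW zy) yx).
exists y; split=> //; split=> //.
exact: (q_i_minimal_qeq_fixed D_mono D_ext _ _ _ bmin Dy ya yx).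
Qed.

End Finite.

Theorem proposition9 (disp : Order.disp_t) (L : finTBDistrLatticeType disp)
  (Ag : Type) (imp : L -> L -> L) (dia box : Ag -> L -> L)
  (HA : is_epistemic_heyting imp dia box) (a b : L) (i : Ag) :
  q_i_minimal (dia i) a b <->
  (exists! b' : L, i_minimal (dia i) b' /\ b' `&` a <> \bot /\ qeq a b b').
Proof.
case: HA => [[heyting monadic] epistemic].
have [D_mono [_ [D_ext [B_defl [_ [_ [D_le_BD [DB_le_B [B_imp_le [D_bot _]]]]]]]]]]
  := monadic i.
have D_idem := dia_idem D_ext B_defl D_le_BD DB_le_B.
have D_fixedN := dia_fixedN heyting D_ext B_defl D_le_BD B_imp_le D_bot
  (epistemic i).
split => [bmin | [b' [[b'min [b'a bb']] _]]].
- have [y [ymin [ya b_y]]] := q_i_minimal_exists heyting D_mono D_ext D_idem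
    D_fixedN _ _ bmin.
  exists y; split => // y' [y'min [_ b_y']].
  apply: (qeq_i_minimal_eq D_mono D_ext _ _ _ ymin y'min ya).
  by rewrite /qeq -b_y b_y'.
- exact: q_i_minimal_of_i_minimal D_mono D_ext D_idem _ _ _ b'min b'a bb'.
Qed.
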